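(* Let $R$ be a $*$-ring. Then $R$ is strongly $J$-$*$-clean if and only if $R/J(R)$ is Boolean and $R$ is strongly $*$-clean.
   Context: All rings are associative with identity. A $*$-ring is a ring $R$ with an involution $*$, i.e. a map $a\mapsto a^*$ with $(a+b)^*=a^*+b^*$, $(ab)^*=b^*a^*$, $(a^* )^*=a$. $U(R)$ denotes the group of units and $J(R)$ the Jacobson radical of $R$. A projection is an element $e$ with $e^2=e=e^*$. $R$ is strongly $J$-$*$-clean if every $a\in R$ can be written $a=e+u$ with $e$ a projection, $u\in J(R)$ and $ae=ea$. $R$ is strongly $*$-clean if every $a\in R$ can be written $a=e+u$ with $e$ a projection, $u\in U(R)$ and $eu=ue$. A ring is Boolean if every element is idempotent. *)

From HB Require Import structures.
From mathcomp Require Import all_boot all_order all_algebra.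
Set Implicit Arguments. Unset Strict Implicit. Unset Printing Implicit Defensive.
Import GRing.Theory.
Local Open Scope ring_scope.

Definition is_involution (R : pzRingType) (inv : R -> R) : Prop :=
  [/\ forall a b : R, inv (a + b) = inv a + inv b,
      forall a b : R, inv (a * b) = inv b * inv a
    & forall a : R, inv (inv a) = a].

Definition is_unit_elt (R : pzRingType) (u : R) : Prop :=
  exists v : R, u * v = 1 /\ v * u = 1.

Definition in_jacobson (R : pzRingType) (a : R) : Prop :=
  forall r : R, is_unit_elt (1 - r * a).

Definition is_projection (R : pzRingType) (inv : R -> R) (e : R) : Prop :=
  e * e = e /\ inv e = e.

Definition strongly_J_star_clean (R : pzRingType) (inv : R -> R) : Prop :=
  forall a : R, exists e u : R,
    [/\ a = e + u, is_projection inv e, in_jacobson u & a * e = e * a].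

Definition strongly_star_clean (R : pzRingType) (inv : R -> R) : Prop :=
  forall a : R, exists e u : R,
    [/\ a = e + u, is_projection inv e, is_unit_elt u & e * u = u * e].

(* R / J(R) is Boolean: every coset a + J(R) is idempotent,
   i.e. a*a - a lies in J(R) for every a in R. *)
Definition quotient_by_J_boolean (R : pzRingType) : Prop :=
  forall a : R, in_jacobson (a * a - a).

From mathcomp Require Import all_boot all_order all_algebra.
Import GRing.Theory.
Local Open Scope ring_scope.

(* Both directions swap the projection e of a decomposition a = e + x for
   1 - e, so that a - (1 - e) = (2e - 1) + x, where 2e - 1 is a unit (its
   square is 1).  If x lies in J(R), then 2e - 1 + x is a unit; and
   (e + x)^2 - (e + x) lies in J(R), so R/J(R) is Boolean.  Conversely, if
   R/J(R) is Boolean then 2 = 2^2 - 2 lies in J(R), and a unit u with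
   u^2 - u in J(R) satisfies u - 1 = u^-1 (u^2 - u) in J(R); hence
   2e - 1 + u = 2e + (u - 1) lies in J(R). *)

Section Jacobson.
Variable R : pzRingType.
Implicit Types e u x y : R.

Lemma unit_eltM x y : is_unit_elt x -> is_unit_elt y -> is_unit_elt (x * y).
Proof.
move=> [x' [xx' x'x]] [y' [yy' y'y]]; exists (y' * x'); split.
  by rewrite mulrA -(mulrA x) yy' mulr1.
by rewrite mulrA -(mulrA y') x'x mulr1.
Qed.

Lemma unit_elt_1subC x y : is_unit_elt (1 - x * y) -> is_unit_elt (1 - y * x).
Proof.
move=> [v [h1 h2]]; exists (1 + y * v * x).
have xyv : x * y * v = v - 1.
  by apply/eqP; rewrite eq_sym subr_eq -h1 mulrBl mul1r addrC subrK.
have vxy : v * (x * y) = v - 1.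
  by apply/eqP; rewrite eq_sym subr_eq -h2 mulrBr mulr1 addrC subrK.
split.
  rewrite mulrBl !mul1r mulrDr mulr1.
  have -> : y * x * (y * v * x) = y * (x * y * v) * x by rewrite !mulrA.
  by rewrite xyv mulrBr mulr1 mulrBl (addrC (y * x)) subrK addrK.
rewrite mulrDl mul1r mulrBr mulr1.
have -> : y * v * x * (y * x) = y * (v * (x * y)) * x by rewrite !mulrA.
by rewrite vxy mulrBr mulr1 mulrBl opprB (addrC (y * v * x)) subrK subrK.
Qed.

Lemma jacobsonMl y x : in_jacobson x -> in_jacobson (y * x).
Proof. by move=> hx r; rewrite mulrA; apply: hx. Qed.

Lemma jacobsonMr x y : in_jacobson x -> in_jacobson (x * y).
Proof.
by move=> hx r; rewrite mulrA; apply: unit_elt_1subC; rewrite mulrA; apply: hx.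
Qed.

Lemma jacobsonN x : in_jacobson x -> in_jacobson (- x).
Proof. by move=> hx r; rewrite mulrN -mulNr. Qed.

Lemma jacobsonD x y : in_jacobson x -> in_jacobson y -> in_jacobson (x + y).
Proof.
move=> hx hy r; have [w [h1 h2]] := hx r.
have -> : 1 - r * (x + y) = (1 - r * x) * (1 - (w * r) * y).
  by rewrite mulrBr mulr1 !mulrA h1 mul1r mulrDr opprD addrA.
by apply: unit_eltM; [exists w | apply: hy].
Qed.

Lemma jacobsonB x y : in_jacobson x -> in_jacobson y -> in_jacobson (x - y).
Proof. by move=> hx hy; apply: jacobsonD => //; apply: jacobsonN. Qed.

Lemma unit_eltDJ u x : is_unit_elt u -> in_jacobson x -> is_unit_elt (u + x).
Proof.
move=> [v [uv vu]] hx.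
have -> : u + x = u * (1 - (- v) * x).
  by rewrite mulNr opprK mulrDr mulr1 mulrA uv mul1r.
by apply: unit_eltM; [exists v | apply: hx].
Qed.

Lemma jacobson_sqrB_idemDJ e x : e * e = e -> in_jacobson x ->
  in_jacobson ((e + x) * (e + x) - (e + x)).
Proof.
move=> ee hx; rewrite mulrDl !mulrDr ee -[e + e * x + _]addrA (addrC e) addrKA.
apply: jacobsonB => //; apply: jacobsonD; first exact: jacobsonMl.
by apply: jacobsonD; [apply: jacobsonMr | apply: jacobsonMl].
Qed.

Lemma jacobson_two : quotient_by_J_boolean R -> in_jacobson (1 + 1 : R).
Proof. by move=> hB; have := hB (1 + 1); rewrite mulrDl mul1r addrK. Qed.

Lemma jacobson_subr1_unit u : is_unit_elt u -> in_jacobson (u * u - u) ->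
  in_jacobson (u - 1).
Proof.
move=> [v [_ vu]] hu.
have -> : u - 1 = v * (u * u - u) by rewrite mulrBr mulrA vu mul1r.
exact: jacobsonMl.
Qed.

Lemma unit_elt_idem_reflection e : e * e = e -> is_unit_elt (e - (1 - e)).
Proof.
move=> ee.
have ff : (1 - e) * (1 - e) = 1 - e.
  by rewrite mulrBl mul1r !mulrBr mulr1 ee subrr subr0.
have ef : e * (1 - e) = 0 by rewrite mulrBr mulr1 ee subrr.
have fe : (1 - e) * e = 0 by rewrite mulrBl mul1r ee subrr.
have ss : (e - (1 - e)) * (e - (1 - e)) = 1.
  rewrite mulrBl (mulrBr e) (mulrBr (1 - e)) ee ef fe ff.
  by rewrite subr0 sub0r opprK addrC subrK.
by exists (e - (1 - e)).
Qed.

End Jacobson.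

Section Involution.
Variables (R : pzRingType) (inv : R -> R).
Hypothesis inv_involutive : is_involution inv.

Lemma involution1 : inv 1 = 1.
Proof.
case: inv_involutive => _ invM invK.
by have := invM (inv 1) 1; rewrite !mulr1 invK mulr1.
Qed.

Lemma involutionN (x : R) : inv (- x) = - inv x.
Proof.
case: inv_involutive => invD _ _.
have inv0 : inv 0 = 0.
  by apply: (addrI (inv 0)); rewrite addr0 -invD addr0.
by apply/eqP; rewrite -addr_eq0 -invD addrC subrr inv0.
Qed.

Lemma projection_1sub (e : R) :
  is_projection inv e -> is_projection inv (1 - e).
Proof.
case: inv_involutive => invD _ _ [ee inve]; split.
  by rewrite mulrBl mul1r mulrBr mulr1 ee subrr subr0.
by rewrite invD involutionN involution1 inve.
Qed.

Lemma strongly_J_star_clean_strongly_star_clean :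
  strongly_J_star_clean inv -> strongly_star_clean inv.
Proof.
move=> hJ a; have [e [x [ha pe hx ae]]] := hJ a.
exists (1 - e), (a - (1 - e)); split.
- by rewrite addrC subrK.
- exact: projection_1sub.
- rewrite ha addrAC; apply: unit_eltDJ hx.
  exact: unit_elt_idem_reflection pe.1.
- apply: commrB _ (commr_refl _).
  by apply: commr_sym; apply: commrB (commr1 a) ae.
Qed.

Lemma strongly_star_clean_strongly_J_star_clean :
  quotient_by_J_boolean R -> strongly_star_clean inv ->
  strongly_J_star_clean inv.
Proof.
move=> hB hS a; have [e [u [ha [ee inve] hu eu]]] := hS a.
exists (1 - e), (a - (1 - e)); split.
- by rewrite addrC subrK.
- exact: projection_1sub.
- have -> : a - (1 - e) = e * (1 + 1) + (u - 1).
    by rewrite ha mulrDr mulr1 opprB !addrA (addrAC e u).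
  apply: jacobsonD; first by apply: jacobsonMl; apply: jacobson_two.
  exact: jacobson_subr1_unit.
- apply: commrB (commr1 a) _; rewrite ha.
  by apply: commr_sym; apply: commrD (commr_refl e) eu.
Qed.

End Involution.

Theorem proposition2p6 (R : pzRingType) (inv : R -> R) :
  is_involution inv ->
  (strongly_J_star_clean inv <->
   (quotient_by_J_boolean R /\ strongly_star_clean inv)).
Proof.
move=> inv_involutive; split; last first.
  by case; apply: strongly_star_clean_strongly_J_star_clean.
move=> hJ; split; last exact: strongly_J_star_clean_strongly_star_clean.
by move=> a; have [e [x [-> [ee _] hx _]]] := hJ a; apply: jacobson_sqrB_idemDJ.
Qed.
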